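(* Let $\mathbf w=(w_n)_{n\ge1}$ be a weight sequence such that there exists $C>0$ with $w_{mn}\le Cw_mw_n$ for all $m,n\in\mathbb N$. Then for every $p\ge1$ and all $\alpha,\beta\in\ell_{\mathbf w,p}$, $$\|\alpha\otimes\beta\|_{\mathbf w,p}\le C^{1/p}\|\alpha\|_{\mathbf w,p}\|\beta\|_{\mathbf w,p}.$$ In particular, $\ell_{\mathbf w,p}$ is a stable Calkin space.
   Context: A weight sequence is a non-increasing sequence $\mathbf w$ of positive numbers with $w_1=1$, $w_n\to0$ and $\sum_nw_n=\infty$. For $1\le p<\infty$, the Lorentz sequence space $\ell_{\mathbf w,p}$ is the space of complex sequences $\alpha$ with $\|\alpha\|_{\mathbf w,p}=\sup_\pi(\sum_n w_n|\alpha_{\pi(n)}|^p)^{1/p}<\infty$, sup over permutations $\pi$ of $\mathbb N$ (equivalently $(\sum_nw_n(\alpha^\star_n)^p)^{1/p}$, with $\alpha^\star$ the non-increasing rearrangement of $(|\alpha_n|)$). For null sequences $\alpha,\beta$, $\alpha\otimes\beta$ is the non-increasing rearrangement with multiplicities of $(|\alpha_i\beta_j|)_{i,j}$. A Calkin space is a linear subspace $\mathfrak i$ of the null sequences $c_0$ such that $\alpha\in\mathfrak i,\beta\in c_0,\beta^\star\le\alpha^\star$ imply $\beta\in\mathfrak i$; it is stable if the smallest Calkin space containing all $\alpha\otimes\beta$, $\alpha,\beta\in\mathfrak i$, equals $\mathfrak i$. *)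

From mathcomp Require Import all_boot all_order all_algebra.
From mathcomp Require Import all_classical all_reals all_analysis.
From mathcomp Require Import complex.
Import Order.TTheory GRing.Theory Num.Theory.
Import numFieldNormedType.Exports.

Set Implicit Arguments.
Unset Strict Implicit.
Unset Printing Implicit Defensive.

Local Open Scope classical_set_scope.
Local Open Scope ring_scope.
Local Open Scope complex_scope.

Section Lorentz.
Variable R : realType.

Definition cabs (z : R[i]) : R := Num.sqrt (complex.Re z ^+ 2 + complex.Im z ^+ 2).

Definition null_seq (a : nat -> R[i]) : Prop := (fun n => cabs (a n)) @ \oo --> (0 : R).

(* Weight sequence w = (w_n)_{n >= 1}; the value w 0 is irrelevant.
   non-increasing, positive, w_1 = 1, w_n -> 0, sum_n w_n = oo. *)
Definition weight_seq (w : nat -> R) : Prop :=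
  [/\ w 1%N = 1,
      (forall n, (1 <= n)%N -> 0 < w n),
      (forall n, (1 <= n)%N -> w n.+1 <= w n),
      w @ \oo --> (0 : R) &
      (\sum_(1 <= n <oo) (w n)%:E = +oo)%E].

(* p-th power of the Lorentz norm:
   sup over permutations pi of N of sum_{n>=1} w_n |a_{pi(n)}|^p
   (sequences a are indexed from 0, so the n-th term is a (pi n) with
    weight w n.+1). *)
Definition lorentz_pow (w : nat -> R) (p : R) (a : nat -> R[i]) : \bar R :=
  ereal_sup [set (\sum_(0 <= n <oo) (w n.+1 * cabs (a (pi n)) `^ p)%:E)%E
            | pi in [set pi : nat -> nat | bijective pi]].

Definition lorentz_space (w : nat -> R) (p : R) : set (nat -> R[i]) :=
  [set a | (lorentz_pow w p a < +oo)%E].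

(* the Lorentz norm ||a||_{w,p} (meaningful for a in l_{w,p}) *)
Definition lorentz_norm (w : nat -> R) (p : R) (a : nat -> R[i]) : R :=
  (fine (lorentz_pow w p a)) `^ p^-1.

(* Non-increasing rearrangement with multiplicities of a (bounded, null)
   nonnegative family f indexed by I:
   f*_n = inf_{|F| <= n} sup_{i notin F} f i   (n >= 0, 0-based). *)
Definition dec_rearr (I : eqType) (f : I -> R) (n : nat) : R :=
  inf [set sup [set f i | i in [set i | i \notin F]]
      | F in [set F : seq I | size F = n]].

Definition rearr (a : nat -> R[i]) : nat -> R := dec_rearr (fun k => cabs (a k)).

Definition tensor (a b : nat -> R[i]) : nat -> R[i] :=
  fun n => (dec_rearr (fun ij : nat * nat => cabs (a ij.1 * b ij.2)) n)%:C.

Definition calkin (I : set (nat -> R[i])) : Prop :=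
  [/\ I `<=` null_seq,
      I (fun _ => 0),
      (forall a b, I a -> I b -> I (fun n => a n + b n)),
      (forall (c : R[i]) a, I a -> I (fun n => c * a n)) &
      (forall a b, I a -> null_seq b -> (forall n, rearr b n <= rearr a n) -> I b)].

Definition calkin_hull (S : set (nat -> R[i])) : set (nat -> R[i]) :=
  [set x | forall J, calkin J -> S `<=` J -> J x].

Definition stable (I : set (nat -> R[i])) : Prop :=
  calkin_hull [set tensor a b | a in I & b in I] = I.

End Lorentz.

(* The non-increasing rearrangement of (|alpha_i beta_j|) is realised by a greedy
   enumeration n |-> (i_n, j_n) of the pairs of indices of alpha* and beta*, with
   ties broken by i + j, so that every initial segment of it is a down-closed set
   of pairs.  A down-closed set of k pairs contains, for every m <= k, at least m
   pairs with (i+1)(j+1) <= m; as w is non-increasing, Abel summation turns this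
   into  sum_{n<N} w_{n+1} t_n^p <= sum_{n<N} w_{(i_n+1)(j_n+1)} t_n^p  for
   t_n = alpha*_{i_n} beta*_{j_n}, and w_{mn} <= C w_m w_n bounds the right-hand
   side by C ||alpha||^p ||beta||^p.  These sums compute the norms because the
   supremum over permutations is attained at the non-increasing rearrangement
   (Hardy-Littlewood).  Stability holds since alpha (x) e_1 has the same
   rearrangement as alpha. *)

From mathcomp Require Import all_boot all_order all_algebra.
From mathcomp Require Import all_classical all_reals all_analysis.
From mathcomp Require Import complex zify ring.
Import Order.TTheory GRing.Theory Num.Theory.
Local Open Scope classical_set_scope.
Local Open Scope ring_scope.
Local Open Scope complex_scope.
Set Implicit Arguments.
Unset Strict Implicit.
Unset Printing Implicit Defensive.

Lemma exists_arg_minn (T : Type) (P : T -> Prop) (kappa : T -> nat) :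
  (exists i, P i) -> exists i, P i /\ forall j, P j -> (kappa i <= kappa j)%N.
Proof.
move=> [i0 Pi0].
have ex : exists n, `[< exists i, P i /\ kappa i = n >].
  by exists (kappa i0); apply/asboolP; exists i0.
case: (ex_minnP ex) => n /asboolP [i [Pi ki]] nmin.
by exists i; split => // j Pj; rewrite ki; apply: nmin; apply/asboolP; exists j.
Qed.

Lemma exists_notin_nat (F : seq nat) : exists i, i \notin F.
Proof.
exists (\max_(i <- F) i).+1; apply/negP => iF.
by have := @leq_bigmax_seq _ F xpredT id _ iF isT; rewrite ltnn.
Qed.

Lemma exists_notin_pair (F : seq (nat * nat)) : exists z, z \notin F.
Proof.
have [n nF] := exists_notin_nat (map fst F); exists (n, 0%N).
by apply: contra nF => nF; apply/mapP; exists (n, 0%N).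
Qed.

Section DownClosed.
Local Open Scope nat_scope.

(* the pair (i, j) stands for the product of the 1-based indices i+1 and j+1 *)
Definition prod_index (z : nat * nat) := z.1.+1 * z.2.+1.

Definition down_closed (D : seq (nat * nat)) :=
  forall y, y \in D -> forall z : nat * nat, z.1 <= y.1 -> z.2 <= y.2 -> z \in D.

Definition box (y : nat * nat) := [seq (i, j) | i <- iota 0 y.1.+1, j <- iota 0 y.2.+1].

Lemma mem_box y z : (z \in box y) = (z.1 <= y.1) && (z.2 <= y.2).
Proof.
apply/allpairsP/andP => [[[i j] [iI jJ ->]]|[z1 z2]].
  by move: iI jJ; rewrite !mem_iota !add0n !ltnS.
by exists z; rewrite !mem_iota !add0n !ltnS z1 z2; split => //; case: z {z1 z2}.
Qed.

Lemma box_uniq y : uniq (box y).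
Proof.
by apply: allpairs_uniq; rewrite ?iota_uniq // => -[? ?] [? ?] _ _ [-> ->].
Qed.

Lemma size_box y : size (box y) = prod_index y.
Proof. by rewrite size_allpairs !size_iota. Qed.

Lemma prod_index_lt_box y z : z \in box y -> z != y -> prod_index z < prod_index y.
Proof.
case: y z => a b [i j]; rewrite mem_box /prod_index /= => /andP[ia jb] zy.
have [ia'|ea] := ltnP i a; first by nia.
have [jb'|eb] := ltnP j b; first by nia.
by move: zy; rewrite (@anti_leq i a) ?ia // (@anti_leq j b) ?jb // eqxx.
Qed.

Lemma down_closed_count D k : uniq D -> down_closed D -> k <= size D ->
  k <= count (fun z => prod_index z <= k) D.
Proof.
move=> uD dD kD; rewrite leqNgt; apply/negP => ck.
have /hasP [y0 y0D ky0] : has (fun z => k < prod_index z) D.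
  apply/negPn/negP => /hasPn Hn.
  suff: count (fun z => prod_index z <= k) D = size D by move=> e; rewrite e ltnNge kD in ck.
  by rewrite -count_predT; apply: eq_in_count => z /Hn; rewrite /= -leqNgt.
have [y [[yD ky] ymin]] := exists_arg_minn prod_index
  (ex_intro (fun z => z \in D /\ k < prod_index z) y0 (conj y0D ky0)).
have sub : {subset rem y (box y) <= [seq z <- D | prod_index z <= k]}.
  move=> z; rewrite mem_rem_uniq ?box_uniq // => /andP[zy zb].
  have zD : z \in D by move: zb; rewrite mem_box => /andP[]; exact: dD.
  rewrite mem_filter zD andbT leqNgt; apply/negP => kz.
  by have := ymin _ (conj zD kz); rewrite leqNgt prod_index_lt_box.
have := uniq_leq_size (rem_uniq y (box_uniq y)) sub.
rewrite size_rem ?size_box ?size_filter; last by rewrite mem_box !leqnn.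
by move=> h; move: ck; rewrite ltnNge (leq_trans _ h) // -ltnS (ltn_predK ky).
Qed.

Lemma sorted_nth_le_of_count (s : seq nat) m x : sorted leq s ->
  m < count (fun y => y <= x) s -> nth 0 s m <= x.
Proof.
move=> ss; apply: contraTT; rewrite -!ltnNge => xm.
have ms : m <= size s.
  by rewrite leqNgt; apply/negP => sm; rewrite nth_default ?(ltnW sm) in xm.
rewrite -(cat_take_drop m s) count_cat.
have -> : count (fun y => y <= x) (drop m s) = 0.
  apply/eqP; rewrite -leqn0 leqNgt -has_count; apply/hasPn => _ /(nthP 0) [i il <-].
  rewrite size_drop in il; rewrite nth_drop -ltnNge; apply: leq_trans xm _.
  apply: (sorted_leq_nth leq_trans leqnn) => //; rewrite ?inE ?leq_addr //.
    by rewrite -subn_gt0 (leq_ltn_trans _ il).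
  by rewrite -ltn_subRL.
by rewrite addn0 ltnS (leq_trans (count_size _ _)) // size_take; case: ltnP.
Qed.

End DownClosed.

Lemma sum_prod_index_ge (R : numDomainType) (W : nat -> R) D :
  (forall n, W n.+2 <= W n.+1) -> uniq D -> down_closed D ->
  \sum_(n < size D) W n.+1 <= \sum_(z <- D) W (prod_index z).
Proof.
move=> Wdec uD dD.
pose s := sort leq (map prod_index D).
have ps : perm_eq s (map prod_index D) by rewrite perm_sort.
have ss : size s = size D by rewrite (perm_size ps) size_map.
rewrite -(big_map prod_index xpredT W) -(perm_big _ ps) (big_nth 0%N) big_mkord ss.
apply: ler_sum => -[m /= mD] _.
(* at least m+1 pairs of D have index at most m+1 *)
have : ((nth 0 s m).-1 <= m)%N.
  rewrite -subn1 leq_subLR add1n.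
  apply: sorted_nth_le_of_count; first by apply: sort_sorted; exact: leq_total.
  by rewrite (permP ps) count_map; exact: down_closed_count.
have : (0 < nth 0 s m)%N.
  have : nth 0%N s m \in map prod_index D by rewrite -(perm_mem ps) mem_nth // ss.
  by case/mapP => z _ ->; rewrite muln_gt0.
case: (nth 0%N s m) => // k _ /= km.
exact: (homo_leq (f := fun n => W n.+1) (r := fun x y => y <= x) lexx
  (fun _ _ _ xy yz => le_trans yz xy) Wdec km).
Qed.

Section Sums.
Variable R : numDomainType.

Lemma sum_iota_ord (F : nat -> R) k : \sum_(n <- iota 0 k) F n = \sum_(n < k) F n.
Proof. by rewrite -(big_mkord xpredT) /index_iota subn0. Qed.

Lemma ler_sum_subset (T : eqType) (s t : seq T) (F : T -> R) :
  uniq s -> uniq t -> {subset s <= t} -> (forall x, 0 <= F x) ->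
  \sum_(x <- s) F x <= \sum_(x <- t) F x.
Proof.
move=> us ut st F0; rewrite [X in _ <= X](bigID (fun x => x \in s)) /=.
have -> : \sum_(x <- t | x \in s) F x = \sum_(x <- s) F x.
  rewrite -big_filter; apply: perm_big; apply: uniq_perm; rewrite ?filter_uniq //.
  by move=> x; rewrite mem_filter; case xs: (x \in s) => //=; exact: st.
by rewrite lerDl; apply: sumr_ge0.
Qed.

Lemma abel_sum_ge0 (v z : nat -> R) N : (forall n, 0 <= v n) -> (forall n, v n.+1 <= v n) ->
  (forall k, (k < N)%N -> 0 <= \sum_(n < k.+1) z n) -> 0 <= \sum_(n < N) v n * z n.
Proof.
move=> v0 vdec zp; case: N zp => [|M] zp; first by rewrite big_ord0.
suff H k : (k <= M)%N -> v k * \sum_(n < k.+1) z n <= \sum_(n < k.+1) v n * z n.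
  by apply: le_trans (H M (leqnn M)); apply: mulr_ge0 => //; exact: zp.
elim: k => [|k IH] kM; first by rewrite !big_ord1.
rewrite big_ord_recr [X in _ <= X]big_ord_recr /= mulrDr lerD2r.
apply: le_trans (IH (ltnW kM)).
by apply: ler_wpM2r => //; apply: zp; exact: ltnW.
Qed.

Lemma ler_sum_abel (v x y : nat -> R) N : (forall n, 0 <= v n) -> (forall n, v n.+1 <= v n) ->
  (forall k, (k < N)%N -> \sum_(n < k.+1) x n <= \sum_(n < k.+1) y n) ->
  \sum_(n < N) v n * x n <= \sum_(n < N) v n * y n.
Proof.
move=> v0 vdec xy; rewrite -subr_ge0 -sumrB.
under eq_bigr do rewrite -mulrBr.
by apply: (@abel_sum_ge0 v (fun n => y n - x n)) => // k kN; rewrite sumrB subr_ge0; exact: xy.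
Qed.

End Sums.

Section Greedy.
Variable R : realDomainType.

Definition greedy (I : eqType) (f : I -> R) (e : nat -> I) :=
  injective e /\ forall n j, j \notin map e (iota 0 n) -> f j <= f (e n).

Definition greedy_tiebreak (I : eqType) (f : I -> R) (kappa : I -> nat) (e : nat -> I) :=
  forall n j, j \notin map e (iota 0 n) -> f j = f (e n) -> (kappa (e n) <= kappa j)%N.

Definition finite_superlevels (I : eqType) (f : I -> R) :=
  forall eps, 0 < eps -> exists L : seq I, forall i, eps <= f i -> i \in L.

Variable I : eqType.
Implicit Types (f : I -> R) (e : nat -> I).

Lemma notin_map_iota e m n : injective e -> (m <= n)%N -> e n \notin map e (iota 0 m).
Proof.
move=> ie mn; apply/mapP => -[k]; rewrite mem_iota add0n => /andP[_ km] /ie nk.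
by move: mn; rewrite nk leqNgt km.
Qed.

Lemma greedy_antitone f e m n : greedy f e -> (m <= n)%N -> f (e n) <= f (e m).
Proof. by move=> [ie ge] mn; apply: ge; exact: notin_map_iota. Qed.

Lemma greedy_comp f e (phi : R -> R) : greedy f e -> (forall i, 0 <= f i) ->
  (forall x y, 0 <= x -> x <= y -> phi x <= phi y) -> greedy (phi \o f) e.
Proof. by move=> [ie ge] f0 phi_homo; split => // n j jn; apply: phi_homo => //; exact: ge. Qed.

Lemma greedy_sum_le f e (J : seq I) : greedy f e -> uniq J ->
  \sum_(j <- J) f j <= \sum_(n < size J) f (e n).
Proof.
move=> [ie ge] uJ; set m := size J; set E := map e (iota 0 m).
have uE : uniq E by rewrite map_inj_uniq ?iota_uniq.
rewrite -(sum_iota_ord (fun n => f (e n))) -(big_map e xpredT f) -/E.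
rewrite (bigID (fun j => j \in E)) [X in _ <= X](bigID (fun j => j \in J)) /=.
have pJE : perm_eq [seq j <- J | j \in E] [seq j <- E | j \in J].
  by apply: uniq_perm; rewrite ?filter_uniq // => x; rewrite !mem_filter andbC.
rewrite -big_filter (perm_big _ pJE) big_filter lerD2l.
have cnt : count (fun j => j \notin E) J = count (fun j => j \notin J) E.
  have := perm_size pJE; rewrite !size_filter => c.
  have sE : size E = m by rewrite size_map size_iota.
  apply/eqP; rewrite -(eqn_add2l (count (mem J) E)) -{1}c !count_predC sE.
  by rewrite -/m.
(* every value of [f] off [E] is at most [f (e m)], every value on [E] at least *)
apply: (@le_trans _ _ (\sum_(j <- J | j \notin E) f (e m))).
  by apply: ler_sum => j jE; exact: ge jE.
rewrite !big_const_seq cnt -big_const_seq.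
rewrite [X in _ <= X]big_seq_cond [X in X <= _]big_seq_cond.
apply: ler_sum => x /andP[/mapP[k]]; rewrite mem_iota add0n => /andP[_ km] -> _.
exact: (greedy_antitone (conj ie ge) (ltnW km)).
Qed.

Lemma greedy_superlevel_bounded f e : greedy f e -> finite_superlevels f ->
  forall d, 0 < d -> exists M, forall n, d <= f (e n) -> (n < M)%N.
Proof.
move=> ge fs d d0; have [L HL] := fs d d0; exists (size L) => n dn.
rewrite ltnNge; apply/negP => Ln.
have ue : uniq (map e (iota 0 (size L).+1)) by rewrite map_inj_uniq ?iota_uniq //; case: ge.
have sub : {subset map e (iota 0 (size L).+1) <= L}.
  move=> x /mapP[k]; rewrite mem_iota add0n => /andP[_ kL] ->; apply: HL.
  by apply: le_trans dn _; apply: greedy_antitone ge _; exact: leq_trans Ln.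
by have := uniq_leq_size ue sub; rewrite size_map size_iota ltnn.
Qed.

Lemma finite_superlevels_greedy f e : greedy f e -> finite_superlevels f ->
  finite_superlevels (f \o e).
Proof.
move=> ge fs eps e0; have [M HM] := greedy_superlevel_bounded ge fs e0.
by exists (iota 0 M) => n /HM; rewrite mem_iota.
Qed.

Lemma greedy_cover f e : greedy f e -> finite_superlevels f ->
  forall i, 0 < f i -> exists n, e n = i.
Proof.
move=> ge fs i fi; have [M HM] := greedy_superlevel_bounded ge fs fi.
apply: contrapT => Hn; suff : f i <= f (e M) by move/HM; rewrite ltnn.
by case: ge => _; apply; apply/mapP => -[n _ ni]; apply: Hn; exists n.
Qed.

Lemma exists_seq_argmax f (s : seq I) x0 : x0 \in s ->
  exists2 m, m \in s & forall x, x \in s -> f x <= f m.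
Proof.
elim: s x0 => [//|y s IH] x0 _.
case: s IH => [|z s] IH.
  by exists y; rewrite ?mem_seq1 // => x; rewrite mem_seq1 => /eqP ->.
have [m ms mmax] := IH z (mem_head _ _).
have [fym|fmy] := leP (f y) (f m).
  exists m; first by rewrite in_cons ms orbT.
  by move=> x /[!in_cons] /orP[/eqP ->//|xs]; apply: mmax.
exists y; first exact: mem_head.
by move=> x /[!in_cons] /orP[/eqP ->//|xs]; apply: le_trans (mmax _ xs) (ltW fmy).
Qed.

Lemma exists_max_notin f (F : seq I) : (forall i, 0 <= f i) -> finite_superlevels f ->
  (exists i, i \notin F) -> exists m, m \notin F /\ forall j, j \notin F -> f j <= f m.
Proof.
move=> f0 fs [i iF].
have [[j0 [j0F fj0]]|f_le0] := pselect (exists j0, j0 \notin F /\ 0 < f j0); last first.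
  exists i; split => // j jF; apply: le_trans (f0 i); rewrite leNgt; apply/negP => fj.
  by apply: f_le0; exists j.
have [L HL] := fs _ fj0.
have j0L : j0 \in [seq i <- L | i \notin F] by rewrite mem_filter j0F HL.
have [m] := exists_seq_argmax f j0L; rewrite mem_filter => /andP[mF _] mmax.
exists m; split => // j jF.
have [fj|fj] := leP (f j0) (f j); first by apply: mmax; rewrite mem_filter jF HL.
by apply: le_trans (ltW fj) _; apply: mmax.
Qed.

Lemma exists_greedy_choice f (kappa : I -> nat) :
  (forall i, 0 <= f i) -> finite_superlevels f -> (forall F : seq I, exists i, i \notin F) ->
  forall F : seq I, exists i, [/\ i \notin F, (forall j, j \notin F -> f j <= f i) &
      (forall j, j \notin F -> f j = f i -> (kappa i <= kappa j)%N)].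
Proof.
move=> f0 fs inf F; have [m [mF mmax]] := exists_max_notin f0 fs (inf F).
have [i [[iF fi] imin]] := exists_arg_minn kappa
  (ex_intro (fun i => i \notin F /\ f i = f m) m (conj mF erefl)).
exists i; split => // [j jF|j jF fj]; first by rewrite fi; apply: mmax.
by apply: imin; split => //; rewrite fj.
Qed.

Lemma exists_greedy f (kappa : I -> nat) :
  (forall i, 0 <= f i) -> finite_superlevels f -> (forall F : seq I, exists i, i \notin F) ->
  exists e, greedy f e /\ greedy_tiebreak f kappa e.
Proof.
move=> f0 fs inf.
have choice := exists_greedy_choice kappa f0 fs inf.
pose pick (F : seq I) := projT1 (cid (choice F)).
have pickP F : [/\ pick F \notin F, (forall j, j \notin F -> f j <= f (pick F)) &
    (forall j, j \notin F -> f j = f (pick F) -> (kappa (pick F) <= kappa j)%N)].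
  by rewrite /pick; case: cid.
pose prefix := fix prefix n := if n is n'.+1 then rcons (prefix n') (pick (prefix n')) else [::].
pose e n := pick (prefix n).
have prefixE n : prefix n = map e (iota 0 n).
  elim: n => [//|n IH]; change (rcons (prefix n) (e n) = map e (iota 0 n.+1)).
  by rewrite -addn1 iotaD map_cat -IH add0n cats1.
have enot n : e n \notin map e (iota 0 n) by rewrite -prefixE; case: (pickP (prefix n)).
have ie : injective e.
  move=> m n emn; case: (ltngtP m n) => [mn|nm|//].
    by move: (enot n); rewrite -emn map_f // mem_iota leq0n add0n.
  by move: (enot m); rewrite emn map_f // mem_iota leq0n add0n.
exists e; split; first split => //.
- by move=> n j; rewrite -prefixE; case: (pickP (prefix n)) => _ H _; apply: H.
- by move=> n j; rewrite -prefixE; case: (pickP (prefix n)) => _ _ H; apply: H.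
Qed.

End Greedy.

Lemma greedy_id (R : realDomainType) (f : nat -> R) : (forall n, f n.+1 <= f n) -> greedy f id.
Proof.
move=> fdec; split => // n j; rewrite map_id mem_iota add0n /= -leqNgt => nj.
exact: (homo_leq (r := fun x y => y <= x) lexx (fun _ _ _ xy yz => le_trans yz xy) fdec nj).
Qed.

Lemma finite_superlevels_mul (R : realFieldType) (I J : eqType) (f : I -> R) (g : J -> R) A B :
  (forall i, 0 <= f i <= A) -> (forall j, 0 <= g j <= B) ->
  finite_superlevels f -> finite_superlevels g ->
  finite_superlevels (fun z : I * J => f z.1 * g z.2).
Proof.
move=> fA gB fs gs eps e0.
have f_ge0 i : 0 <= f i by case/andP: (fA i).
have g_ge0 j : 0 <= g j by case/andP: (gB j).
have f_leA i : f i <= A by case/andP: (fA i).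
have g_leB j : g j <= B by case/andP: (gB j).
have [A0|A0] := leP A 0.
  exists [::] => z ez; suff: eps <= 0 by rewrite leNgt e0.
  have fz0 : f z.1 = 0 by apply: le_anti; rewrite f_ge0 (le_trans (f_leA _) A0).
  by rewrite fz0 mul0r in ez.
have [B0|B0] := leP B 0.
  exists [::] => z ez; suff: eps <= 0 by rewrite leNgt e0.
  have gz0 : g z.2 = 0 by apply: le_anti; rewrite g_ge0 (le_trans (g_leB _) B0).
  by rewrite gz0 mulr0 in ez.
have [Lf HLf] := fs (eps / B) (divr_gt0 e0 B0).
have [Lg HLg] := gs (eps / A) (divr_gt0 e0 A0).
exists [seq (i, j) | i <- Lf, j <- Lg] => -[i j] /= ez.
apply/allpairsP; exists (i, j); split => //.
  by apply: HLf; rewrite ler_pdivrMr //; apply: le_trans ez _; exact: ler_wpM2l.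
by apply: HLg; rewrite ler_pdivrMr // mulrC; apply: le_trans ez _; exact: ler_wpM2r.
Qed.

Section GreedyRearrangement.
Variables (R : realType) (I : eqType) (f : I -> R) (e : nat -> I).
Hypothesis ge : greedy f e.

Let compl_values (F : seq I) := [set f i | i in [set i | i \notin F]].

Let compl_values_ub F : has_ubound (compl_values F).
Proof. by exists (f (e 0%N)) => _ [i iF <-]; case: ge => _; apply. Qed.

Lemma greedy_le_sup_compl n (F : seq I) : size F = n -> f (e n) <= sup (compl_values F).
Proof.
move=> sF; have [ie _] := ge.
have /hasP [x /mapP [k kn ->] ekF] : has (fun x => x \notin F) (map e (iota 0 n.+1)).
  apply/negPn/negP => /hasPn Hn; have := @uniq_leq_size _ (map e (iota 0 n.+1)) F.
  rewrite size_map size_iota sF ltnn map_inj_uniq ?iota_uniq // => /(_ isT) sub.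
  by suff: false by []; apply: sub => y /Hn /negPn.
move: kn; rewrite mem_iota add0n ltnS => kn.
apply: le_trans (greedy_antitone ge kn) _.
by apply: ub_le_sup; [exact: compl_values_ub | exists (e k)].
Qed.

Lemma dec_rearr_greedy n : dec_rearr f n = f (e n).
Proof.
set F0 := map e (iota 0 n).
have sF0 : size F0 = n by rewrite size_map size_iota.
have supF0 : sup (compl_values F0) = f (e n).
  apply/eqP; rewrite eq_le greedy_le_sup_compl // andbT.
  apply: ge_sup; first by exists (f (e n)), (e n) => //; exact: notin_map_iota (proj1 ge) _.
  by move=> _ [i iF <-]; case: ge => _; apply.
apply/eqP; rewrite eq_le; apply/andP; split.
  rewrite -supF0; apply: ge_inf; last by exists F0.
  by exists (f (e n)) => _ [F sF <-]; exact: greedy_le_sup_compl.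
apply: lb_le_inf; first by exists (sup (compl_values F0)), F0.
by move=> _ [F sF <-]; exact: greedy_le_sup_compl.
Qed.

End GreedyRearrangement.

Lemma greedy_prefix_down_closed (R : realDomainType) (al be : nat -> R) (P : nat -> nat * nat) :
  (forall i, 0 <= al i) -> (forall j, 0 <= be j) ->
  {homo al : i j / (i <= j)%N >-> j <= i} -> {homo be : i j / (i <= j)%N >-> j <= i} ->
  greedy (fun z : nat * nat => al z.1 * be z.2) P ->
  greedy_tiebreak (fun z : nat * nat => al z.1 * be z.2) (fun z => z.1 + z.2)%N P ->
  forall N, down_closed (map P (iota 0 N)).
Proof.
move=> al0 be0 al_anti be_anti [iP gP] tP N y /mapP[n]; rewrite mem_iota add0n /= => nN -> z z1 z2.
suff : z \in map P (iota 0 n.+1).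
  case/mapP => k; rewrite mem_iota add0n /= => kn ->; apply/mapP; exists k => //.
  by rewrite mem_iota add0n; apply: leq_trans kn nN.
apply: contraT => zn.
have zn' : z \notin map P (iota 0 n).
  apply: contra zn => /mapP[k]; rewrite mem_iota add0n => /andP[_ kn] ->.
  by rewrite map_f // mem_iota add0n ltnS (ltnW kn).
(* [z] lies below [P n], so it has at least its value, hence the same value,
   and the tie-break forces [z = P n] *)
have eq_val : al z.1 * be z.2 = al (P n).1 * be (P n).2.
  apply/eqP; rewrite eq_le gP //=.
  by apply: ler_pM => //; [exact: al_anti | exact: be_anti].
have := tP n z zn' eq_val; rewrite /= => kz.
have ez : z = P n.
  by move: z1 z2 kz; case: (z); case: (P n) => a b c d /= ca db cd; congr pair; lia.
have : P n \in map P (iota 0 n.+1) by apply/mapP; exists n => //; rewrite mem_iota add0n ltnSn.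
by rewrite -ez (negbTE zn).
Qed.

Lemma injective_extend_bij (e : nat -> nat) N : injective e ->
  exists pi : nat -> nat, bijective pi /\ forall n, (n < N)%N -> pi n = e n.
Proof.
move=> ie; elim: N => [|N [pi [[g pig gpi] H]]].
  by exists id; split => //; exists id.
(* compose [pi] with the transposition of [N] and [g (e N)] *)
pose t := g (e N).
pose sw x := if x == N then t else if x == t then N else x.
have swK : involutive sw.
  move=> x; rewrite /sw; case: (eqVneq x N) => [->|xN].
    by case: (eqVneq t N) => [->|tN]; rewrite ?eqxx // tN eqxx.
  case: (eqVneq x t) => [->|xt]; first by rewrite eqxx.
  by rewrite (negbTE xN) (negbTE xt).
exists (pi \o sw); split; first by apply: bij_comp; [exists g | exact: inv_bij].
move=> n; rewrite ltnS leq_eqVlt => /orP[/eqP ->|nN] /=.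
  by rewrite /sw eqxx /t gpi.
have nN' : n != N by rewrite neq_ltn nN.
have nt : n != t.
  apply/eqP => nt; have := H n nN; rewrite nt /t gpi => /ie eN.
  by move: nN'; rewrite nt /t -eN eqxx.
by rewrite /sw (negbTE nN') (negbTE nt); apply: H.
Qed.

Lemma greedy_pair_comp (R : realDomainType) (I J : eqType) (f : I -> R) (g : J -> R)
    (ea : nat -> I) (eb : nat -> J) (P : nat -> nat * nat) :
  (forall i, 0 <= f i) -> (forall j, 0 <= g j) ->
  greedy f ea -> greedy g eb -> finite_superlevels f -> finite_superlevels g ->
  greedy (fun z : nat * nat => f (ea z.1) * g (eb z.2)) P ->
  greedy (fun ij : I * J => f ij.1 * g ij.2) (fun n => (ea (P n).1, eb (P n).2)).
Proof.
move=> f0 g0 gea geb fs gs [iP gP]; split.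
  move=> m k [/(proj1 gea) e1 /(proj1 geb) e2]; apply: iP.
  by move: e1 e2; case: (P m); case: (P k) => ? ? ? ? /= -> ->.
move=> n [x y] xyn /=.
have [fx0|fx_neq0] := eqVneq (f x) 0; first by rewrite fx0 mul0r mulr_ge0.
have [gy0|gy_neq0] := eqVneq (g y) 0; first by rewrite gy0 mulr0 mulr_ge0.
have fx_gt0 : 0 < f x by rewrite lt_def fx_neq0 f0.
have gy_gt0 : 0 < g y by rewrite lt_def gy_neq0 g0.
have [i ei] := greedy_cover gea fs fx_gt0.
have [j ej] := greedy_cover geb gs gy_gt0.
rewrite -ei -ej; apply: (gP n (i, j)); apply: contra xyn => /mapP[k kn Pk].
by apply/mapP; exists k => //; rewrite -Pk /= ei ej.
Qed.

Lemma ler_powR_ge0 (R : realType) (p x y : R) : 0 <= p -> 0 <= x -> x <= y -> x `^ p <= y `^ p.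
Proof. by move=> p0 x0 xy; rewrite ge0_ler_powR ?nnegrE // (le_trans x0 xy). Qed.

Lemma powRD_le (R : realType) (p x y : R) : 0 <= p -> 0 <= x -> 0 <= y ->
  (x + y) `^ p <= 2 `^ p * (x `^ p + y `^ p).
Proof.
move=> p0; wlog xy : x y / x <= y.
  move=> H x0 y0; have [xy|yx] := leP x y; first exact: H.
  by rewrite addrC [x `^ p + _]addrC; apply: H => //; exact: ltW.
move=> x0 y0; apply: (@le_trans _ _ ((2 * y) `^ p)).
  by rewrite ler_powR_ge0 ?addr_ge0 // mulr2n mulrDl mul1r lerD2r.
rewrite powRM // ?ler0n // ler_wpM2l ?powR_ge0 //.
by rewrite lerDr powR_ge0.
Qed.

Lemma sum_pairs_le_box (R : numDomainType) (A B : nat -> R) (Z : seq (nat * nat)) y :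
  (forall i, 0 <= A i) -> (forall j, 0 <= B j) -> uniq Z -> {subset Z <= box y} ->
  \sum_(z <- Z) A z.1 * B z.2 <= (\sum_(i < y.1.+1) A i) * (\sum_(j < y.2.+1) B j).
Proof.
move=> A0 B0 uZ Zy; apply: le_trans (ler_sum_subset uZ (box_uniq y) Zy _) _.
  by move=> z; apply: mulr_ge0.
rewrite -!sum_iota_ord mulr_suml big_allpairs.
by under [X in _ <= X]eq_bigr do rewrite mulr_sumr.
Qed.

Section ComplexModulus.
Variable R : realType.
Implicit Types x y z : R[i].

Lemma cabsE z : (cabs z)%:C = `|z|.
Proof. by rewrite normc_def. Qed.

Lemma cabs_ge0 z : 0 <= cabs z.
Proof. exact: sqrtr_ge0. Qed.

Lemma cabsM x y : cabs (x * y) = cabs x * cabs y.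
Proof. by apply: (@complexI R); rewrite rmorphM /= !cabsE normrM. Qed.

Lemma cabsD x y : cabs (x + y) <= cabs x + cabs y.
Proof. by rewrite -lecR rmorphD /= !cabsE ler_normD. Qed.

Lemma cabs_real (r : R) : cabs r%:C = `|r|.
Proof. by rewrite /cabs /= expr0n /= addr0 sqrtr_sqr. Qed.

Lemma cabs0 : cabs (0 : R[i]) = 0.
Proof. by rewrite (cabs_real 0) normr0. Qed.

Lemma cabs1 : cabs (1 : R[i]) = 1.
Proof. by rewrite (cabs_real 1) normr1. Qed.

End ComplexModulus.

Section NullSequences.
Variable R : realType.
Implicit Types a : nat -> R[i].

Lemma null_seq_finite_superlevels a : null_seq a -> finite_superlevels (fun k => cabs (a k)).
Proof.
move=> /cvgrPdist_lt a_null eps e0; have [N _ HN] := a_null eps e0.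
exists (iota 0 N) => i ei; rewrite mem_iota add0n /= ltnNge; apply/negP => Ni.
have := HN i Ni; rewrite sub0r normrN ger0_norm ?cabs_ge0 // => /lt_le_trans/(_ ei).
by rewrite ltxx.
Qed.

Lemma null_seq_greedy a : null_seq a -> exists e, greedy (fun k => cabs (a k)) e.
Proof.
move=> a_null; have [e [ge _]] := exists_greedy id (fun k => cabs_ge0 (a k))
  (null_seq_finite_superlevels a_null) exists_notin_nat.
by exists e.
Qed.

Lemma not_null_seq_bounded_below a : ~ null_seq a ->
  exists2 eps : R, 0 < eps & exists e : nat -> nat, injective e /\ forall n, eps <= cabs (a (e n)).
Proof.
move=> a_not_null; apply: contrapT => Hn; apply: a_not_null; apply/cvgrPdist_lt => eps e0.
have [N HN] : exists N, forall n, (N <= n)%N -> cabs (a n) < eps.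
  apply: contrapT => HN; apply: Hn; exists eps => //.
  have {}HN N : exists n, (N <= n)%N /\ eps <= cabs (a n).
    apply: contrapT => HNn; apply: HN; exists N => n Nn.
    by rewrite ltNge; apply/negP => ean; apply: HNn; exists n.
  pose s N := projT1 (cid (HN N)).
  have sP N : (N <= s N)%N /\ eps <= cabs (a (s N)) by rewrite /s; case: cid.
  pose e := fix e n := if n is n'.+1 then s (e n').+1 else s 0%N.
  have e_step n : (e n < e n.+1)%N by case: (sP (e n).+1).
  have e_incr := homo_ltn ltn_trans e_step.
  exists e; split.
    move=> m n emn; case: (ltngtP m n) => [mn|nm|//].
      by have := e_incr _ _ mn; rewrite emn ltnn.
    by have := e_incr _ _ nm; rewrite emn ltnn.
  by case=> [|n]; [case: (sP 0%N) | case: (sP (e n).+1)].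
by exists N => // n Nn /=; rewrite sub0r normrN ger0_norm ?cabs_ge0 //; exact: HN.
Qed.

End NullSequences.

Section Tensor.
Variable R : realType.
Implicit Types a b : nat -> R[i].

Lemma tensor_greedy_repr a b : null_seq a -> null_seq b ->
  exists (ea eb : nat -> nat) (P : nat -> nat * nat),
  [/\ greedy (fun k => cabs (a k)) ea, greedy (fun k => cabs (b k)) eb,
      greedy (fun z : nat * nat => cabs (a (ea z.1)) * cabs (b (eb z.2))) P,
      greedy_tiebreak (fun z : nat * nat => cabs (a (ea z.1)) * cabs (b (eb z.2)))
        (fun z => z.1 + z.2)%N P &
      forall n, tensor a b n = (cabs (a (ea (P n).1)) * cabs (b (eb (P n).2)))%:C].
Proof.
move=> a_null b_null.
have [ea gea] := null_seq_greedy a_null; have [eb geb] := null_seq_greedy b_null.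
have fa := null_seq_finite_superlevels a_null; have fb := null_seq_finite_superlevels b_null.
have fab : finite_superlevels (fun z : nat * nat => cabs (a (ea z.1)) * cabs (b (eb z.2))).
  apply: (finite_superlevels_mul (f := fun i => cabs (a (ea i))) (g := fun j => cabs (b (eb j)))
    (A := cabs (a (ea 0%N))) (B := cabs (b (eb 0%N)))).
  - by move=> i; rewrite cabs_ge0 (greedy_antitone gea (leq0n i)).
  - by move=> j; rewrite cabs_ge0 (greedy_antitone geb (leq0n j)).
  - exact: finite_superlevels_greedy gea fa.
  - exact: finite_superlevels_greedy geb fb.
have [P [gP tP]] := exists_greedy (fun z : nat * nat => (z.1 + z.2)%N)
  (fun z => mulr_ge0 (cabs_ge0 _) (cabs_ge0 _)) fab exists_notin_pair.
exists ea, eb, P; split => // n.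
have gP' := greedy_pair_comp (fun i => cabs_ge0 (a i)) (fun j => cabs_ge0 (b j)) gea geb fa fb gP.
rewrite /tensor (_ : (fun ij : nat * nat => _) = (fun ij => cabs (a ij.1) * cabs (b ij.2))).
  by rewrite (dec_rearr_greedy gP').
by apply/funext => ij; rewrite cabsM.
Qed.

Definition delta0 : nat -> R[i] := fun n => if n == 0%N then 1 else 0.

Lemma cabs_delta0 n : cabs (delta0 n) = (n == 0%N)%:R.
Proof. by rewrite /delta0; case: eqP => _; [exact: cabs1 | exact: cabs0]. Qed.

Lemma tensor_delta0_greedy a : null_seq a -> exists ea,
  greedy (fun k => cabs (a k)) ea /\ forall n, tensor a delta0 n = (cabs (a (ea n)))%:C.
Proof.
move=> a_null; have [ea gea] := null_seq_greedy a_null; exists ea; split => // n.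
have gP : greedy (fun ij : nat * nat => cabs (a ij.1 * delta0 ij.2)) (fun n => (ea n, 0%N)).
  split; first by move=> m k [/(proj1 gea)].
  move=> k [x [|y]] xyk; rewrite /= !cabsM !cabs_delta0 /= ?mulr0 ?mulr1; last first.
    exact: cabs_ge0.
  by apply: (proj2 gea); apply: contra xyk => /mapP[m mk ->]; apply/mapP; exists m.
by rewrite /tensor (dec_rearr_greedy gP) /= cabsM cabs_delta0 mulr1.
Qed.

End Tensor.

Arguments delta0 {R}.

Section LorentzSpace.
Variables (R : realType) (w : nat -> R) (p : R).
Hypothesis w_ge0 : forall n, 0 <= w n.+1.
Hypothesis w_antitone : forall n, w n.+2 <= w n.+1.
Hypothesis p_gt0 : 0 < p.
Implicit Types (a b : nat -> R[i]) (g : nat -> R).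

Let p_ge0 : 0 <= p := ltW p_gt0.

Definition lorentz_series (g : nat -> R) : \bar R :=
  (\sum_(0 <= n <oo) (w n.+1 * g n `^ p)%:E)%E.

Lemma lorentz_series_ge_partial g N :
  ((\sum_(n < N) w n.+1 * g n `^ p)%:E <= lorentz_series g)%E.
Proof.
rewrite -sumEFin -(big_mkord xpredT (fun n => (w n.+1 * g n `^ p)%:E)).
by apply: nneseries_lim_ge => n _ _; rewrite lee_fin mulr_ge0 ?powR_ge0.
Qed.

Lemma lorentz_series_le g M :
  (forall N, ((\sum_(n < N) w n.+1 * g n `^ p)%:E <= M)%E) -> (lorentz_series g <= M)%E.
Proof.
move=> gM; apply: lime_le.
  by apply: is_cvg_nneseries => n _ _; rewrite lee_fin mulr_ge0 ?powR_ge0.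
by apply: nearW => N; rewrite sumEFin big_mkord.
Qed.

Lemma lorentz_pow_ge_partial a (pi : nat -> nat) N : bijective pi ->
  ((\sum_(n < N) w n.+1 * cabs (a (pi n)) `^ p)%:E <= lorentz_pow w p a)%E.
Proof.
move=> bpi; apply: le_trans (lorentz_series_ge_partial (fun n => cabs (a (pi n))) N) _.
by apply: ereal_sup_ubound; exists pi.
Qed.

Lemma lorentz_pow_ge0 a : (0 <= lorentz_pow w p a)%E.
Proof.
have bij_id : bijective (@id nat) by exists id.
by have := lorentz_pow_ge_partial a 0 bij_id; rewrite big_ord0.
Qed.

Lemma lorentz_pow_fineK a : lorentz_space w p a ->
  (fine (lorentz_pow w p a))%:E = lorentz_pow w p a.
Proof. by move=> La; rewrite fineK // ge0_fin_numE ?lorentz_pow_ge0. Qed.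

Lemma partial_le_lorentz_pow a (pi : nat -> nat) N : lorentz_space w p a -> bijective pi ->
  \sum_(n < N) w n.+1 * cabs (a (pi n)) `^ p <= fine (lorentz_pow w p a).
Proof. by move=> La bpi; rewrite -lee_fin lorentz_pow_fineK //; exact: lorentz_pow_ge_partial. Qed.

Lemma lorentz_space_partial_bound a (r : R) :
  (forall (pi : nat -> nat) N, bijective pi -> \sum_(n < N) w n.+1 * cabs (a (pi n)) `^ p <= r) ->
  lorentz_space w p a.
Proof.
move=> ar; apply: (@le_lt_trans _ _ r%:E); last exact: ltry.
apply: ge_ereal_sup => _ [pi /= bpi <-].
by apply: (lorentz_series_le (g := fun n => cabs (a (pi n)))) => N; rewrite lee_fin ar.
Qed.

(* Hardy--Littlewood: the non-increasing rearrangement maximizes the weighted sum *)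
Lemma lorentz_pow_le_greedy a e : greedy (fun k => cabs (a k)) e ->
  (lorentz_pow w p a <= lorentz_series (fun n => cabs (a (e n))))%E.
Proof.
move=> ge; apply: ge_ereal_sup => _ [pi /= bpi <-].
apply: (lorentz_series_le (g := fun n => cabs (a (pi n)))) => N.
apply: le_trans (lorentz_series_ge_partial _ N); rewrite lee_fin.
apply: (@ler_sum_abel _ (fun n => w n.+1) (fun n => cabs (a (pi n)) `^ p)
  (fun n => cabs (a (e n)) `^ p)) => // k _.
have gep : greedy (fun k => cabs (a k) `^ p) e.
  apply: (greedy_comp (phi := fun x => x `^ p)) => // [i|x y]; first exact: cabs_ge0.
  exact: ler_powR_ge0 p_ge0.
have := greedy_sum_le (J := map pi (iota 0 k.+1)) gep.
rewrite size_map size_iota big_map sum_iota_ord; apply.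
by rewrite map_inj_uniq ?iota_uniq //; exact: bij_inj.
Qed.

Lemma lorentz_pow_ge_injective a e : injective e ->
  (lorentz_series (fun n => cabs (a (e n))) <= lorentz_pow w p a)%E.
Proof.
move=> ie; apply: lorentz_series_le => N.
have [pi [bpi pie]] := injective_extend_bij N ie.
rewrite (eq_bigr (fun n : 'I_N => w n.+1 * cabs (a (pi n)) `^ p)) => [|n _]; last by rewrite pie.
exact: lorentz_pow_ge_partial.
Qed.

Lemma partial_le_lorentz_pow_inj a (e : nat -> nat) N : lorentz_space w p a -> injective e ->
  \sum_(n < N) w n.+1 * cabs (a (e n)) `^ p <= fine (lorentz_pow w p a).
Proof.
move=> La ie; rewrite -lee_fin lorentz_pow_fineK //.
by apply: le_trans (lorentz_pow_ge_injective a ie); exact: lorentz_series_ge_partial.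
Qed.

Lemma lorentz_space0 : lorentz_space w p (fun _ => 0).
Proof.
apply: (@lorentz_space_partial_bound _ 0) => pi N _; rewrite big1 // => n _.
by rewrite cabs0 powR0 ?mulr0 // gt_eqF.
Qed.

Lemma lorentz_spaceD a b : lorentz_space w p a -> lorentz_space w p b ->
  lorentz_space w p (fun n => a n + b n).
Proof.
move=> La Lb; apply: (@lorentz_space_partial_bound _
  (2 `^ p * (fine (lorentz_pow w p a) + fine (lorentz_pow w p b)))) => pi N bpi.
apply: (@le_trans _ _ (2 `^ p * (\sum_(n < N) w n.+1 * cabs (a (pi n)) `^ p +
   \sum_(n < N) w n.+1 * cabs (b (pi n)) `^ p))); last first.
  by rewrite ler_wpM2l ?powR_ge0 // lerD ?partial_le_lorentz_pow.
rewrite -big_split mulr_sumr; apply: ler_sum => n _.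
rewrite /= -mulrDr mulrCA ler_wpM2l //.
apply: le_trans (powRD_le p_ge0 (cabs_ge0 _) (cabs_ge0 _)).
by apply: (ler_powR_ge0 p_ge0); [exact: cabs_ge0 | exact: cabsD].
Qed.

Lemma lorentz_spaceZ (c : R[i]) a : lorentz_space w p a ->
  lorentz_space w p (fun n => c * a n).
Proof.
move=> La; apply: (@lorentz_space_partial_bound _ (cabs c `^ p * fine (lorentz_pow w p a))).
move=> pi N bpi; apply: (@le_trans _ _ (cabs c `^ p * \sum_(n < N) w n.+1 * cabs (a (pi n)) `^ p)).
  by rewrite mulr_sumr; apply: ler_sum => n _; rewrite cabsM powRM ?cabs_ge0 // mulrCA.
by rewrite ler_wpM2l ?powR_ge0 ?partial_le_lorentz_pow.
Qed.

Hypothesis w_sum_infty : (\sum_(1 <= n <oo) (w n)%:E = +oo)%E.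

Lemma weight_partial_sum_unbounded M : exists N, M < \sum_(n < N) w n.+1.
Proof.
apply: contrapT => Hn.
have partial_le N : \sum_(n < N) w n.+1 <= M.
  by rewrite leNgt; apply/negP => MN; apply: Hn; exists N.
suff : (\sum_(1 <= n <oo) (w n)%:E <= M%:E)%E by rewrite w_sum_infty leye_eq.
apply: lime_le; first by apply: is_cvg_nneseries => -[|n] // _ _; rewrite lee_fin.
apply: nearW => -[|n]; rewrite sumEFin lee_fin.
  by rewrite big_geq //; apply: le_trans (partial_le 0%N); rewrite big_ord0.
by rewrite big_add1 /= big_mkord.
Qed.

Lemma lorentz_space_null a : lorentz_space w p a -> null_seq a.
Proof.
move=> La; apply: contrapT => /not_null_seq_bounded_below [eps e0 [e [ie e_ge]]].
have [N HN] := weight_partial_sum_unbounded (fine (lorentz_pow w p a) / eps `^ p).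
have := partial_le_lorentz_pow_inj N La ie; apply/negP; rewrite -ltNge.
apply: lt_le_trans (_ : eps `^ p * \sum_(n < N) w n.+1 <= _).
  by rewrite mulrC -ltr_pdivrMr ?powR_gt0.
rewrite mulr_sumr; apply: ler_sum => n _; rewrite mulrC ler_wpM2l //.
exact: ler_powR_ge0 p_ge0 (ltW e0) (e_ge n).
Qed.

Lemma lorentz_space_rearr_le a b : lorentz_space w p a -> null_seq b ->
  (forall n, rearr b n <= rearr a n) -> lorentz_space w p b.
Proof.
move=> La b_null ba; have [ea gea] := null_seq_greedy (lorentz_space_null La).
have [eb geb] := null_seq_greedy b_null.
apply: le_lt_trans (lorentz_pow_le_greedy geb) _.
apply: le_lt_trans La; apply: le_trans (lorentz_pow_ge_injective a (proj1 gea)).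
apply: lee_nneseries => [n _ _|n _]; first by rewrite lee_fin mulr_ge0 ?powR_ge0.
rewrite lee_fin ler_wpM2l // ler_powR_ge0 ?cabs_ge0 //.
by have := ba n; rewrite /rearr (dec_rearr_greedy gea) (dec_rearr_greedy geb).
Qed.

Lemma calkin_lorentz_space : calkin (lorentz_space w p).
Proof.
split.
- by move=> a; exact: lorentz_space_null.
- exact: lorentz_space0.
- exact: lorentz_spaceD.
- exact: lorentz_spaceZ.
- exact: lorentz_space_rearr_le.
Qed.

Lemma sum_weight_le_prod_index (al be : nat -> R) (P : nat -> nat * nat) N :
  (forall i, 0 <= al i) -> (forall j, 0 <= be j) ->
  {homo al : i j / (i <= j)%N >-> j <= i} -> {homo be : i j / (i <= j)%N >-> j <= i} ->
  greedy (fun z : nat * nat => al z.1 * be z.2) P ->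
  greedy_tiebreak (fun z : nat * nat => al z.1 * be z.2) (fun z => z.1 + z.2)%N P ->
  \sum_(n < N) w n.+1 * (al (P n).1 * be (P n).2) `^ p <=
  \sum_(n < N) w (prod_index (P n)) * (al (P n).1 * be (P n).2) `^ p.
Proof.
move=> al0 be0 al_anti be_anti gP tP.
pose t n := (al (P n).1 * be (P n).2) `^ p.
rewrite (eq_bigr (fun n : 'I_N => t n * w n.+1)) => [|n _]; last exact: mulrC.
rewrite [X in _ <= X](eq_bigr (fun n : 'I_N => t n * w (prod_index (P n)))) => [|n _];
  last exact: mulrC.
apply: (@ler_sum_abel _ t (fun n => w n.+1) (fun n => w (prod_index (P n)))) => [n|n|k _].
- exact: powR_ge0.
- by apply: ler_powR_ge0 (greedy_antitone gP (leqnSn n)); rewrite // mulr_ge0.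
have uD : uniq (map P (iota 0 k.+1)) by rewrite map_inj_uniq ?iota_uniq //; case: gP.
have := sum_prod_index_ge w_antitone uD
  (greedy_prefix_down_closed al0 be0 al_anti be_anti gP tP (N := k.+1)).
by rewrite size_map size_iota big_map sum_iota_ord.
Qed.

Lemma sum_pairs_le_lorentz_pow a b (ea eb : nat -> nat) (P : nat -> nat * nat) N :
  lorentz_space w p a -> lorentz_space w p b -> injective ea -> injective eb -> injective P ->
  \sum_(n < N) (w (P n).1.+1 * cabs (a (ea (P n).1)) `^ p) *
                (w (P n).2.+1 * cabs (b (eb (P n).2)) `^ p)
  <= fine (lorentz_pow w p a) * fine (lorentz_pow w p b).
Proof.
move=> La Lb iea ieb iP.
pose A i := w i.+1 * cabs (a (ea i)) `^ p; pose B j := w j.+1 * cabs (b (eb j)) `^ p.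
have A0 i : 0 <= A i by rewrite mulr_ge0 ?powR_ge0.
have B0 j : 0 <= B j by rewrite mulr_ge0 ?powR_ge0.
set Z := map P (iota 0 N); set M := (\max_(z <- Z) (z.1 + z.2))%N.
apply: (@le_trans _ _ ((\sum_(i < M.+1) A i) * (\sum_(j < M.+1) B j))).
  rewrite -(sum_iota_ord (fun n => A (P n).1 * B (P n).2)).
  rewrite -(big_map P xpredT (fun z => A z.1 * B z.2)) -/Z.
  apply: (sum_pairs_le_box (y := (M, M))) => // [|z zZ]; first by rewrite map_inj_uniq ?iota_uniq.
  have Mz := @leq_bigmax_seq _ Z xpredT (fun z : nat * nat => (z.1 + z.2)%N) z zZ isT.
  by rewrite mem_box (leq_trans (leq_addr _ _) Mz) (leq_trans (leq_addl _ _) Mz).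
apply: ler_pM; [exact: sumr_ge0 | exact: sumr_ge0 | |].
- exact: partial_le_lorentz_pow_inj La iea.
- exact: partial_le_lorentz_pow_inj Lb ieb.
Qed.

Variable C : R.
Hypothesis C_ge0 : 0 <= C.
Hypothesis w_submul : forall m n, (1 <= m)%N -> (1 <= n)%N -> w (m * n)%N <= C * w m * w n.

Lemma lorentz_pow_tensor_le a b : lorentz_space w p a -> lorentz_space w p b ->
  (lorentz_pow w p (tensor a b) <=
     (C * (fine (lorentz_pow w p a) * fine (lorentz_pow w p b)))%:E)%E.
Proof.
move=> La Lb.
have [ea [eb [P [gea geb gP tP tE]]]] :=
  tensor_greedy_repr (lorentz_space_null La) (lorentz_space_null Lb).
pose al i := cabs (a (ea i)); pose be j := cabs (b (eb j)).
have al0 i : 0 <= al i by exact: cabs_ge0.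
have be0 j : 0 <= be j by exact: cabs_ge0.
have ctE n : cabs (tensor a b n) = al (P n).1 * be (P n).2.
  by rewrite tE cabs_real ger0_norm ?mulr_ge0 ?cabs_ge0.
have g_id : greedy (fun k => cabs (tensor a b k)) id.
  by apply: greedy_id => n; rewrite !ctE; exact: greedy_antitone gP (leqnSn n).
apply: le_trans (lorentz_pow_le_greedy g_id) _; apply: lorentz_series_le => N; rewrite lee_fin.
under eq_bigr do rewrite ctE.
apply: le_trans (sum_weight_le_prod_index N al0 be0 _ _ gP tP) _.
- by move=> i j ij; exact: greedy_antitone gea ij.
- by move=> i j ij; exact: greedy_antitone geb ij.
pose A i := w i.+1 * al i `^ p; pose B j := w j.+1 * be j `^ p.
apply: (@le_trans _ _ (C * \sum_(n < N) A (P n).1 * B (P n).2)).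
  rewrite mulr_sumr; apply: ler_sum => n _.
  have -> : C * (A (P n).1 * B (P n).2) =
      C * w (P n).1.+1 * w (P n).2.+1 * (al (P n).1 `^ p * be (P n).2 `^ p) by rewrite /A /B; ring.
  by rewrite powRM // ler_wpM2r ?mulr_ge0 ?powR_ge0 ?w_submul.
by rewrite ler_wpM2l //; exact: sum_pairs_le_lorentz_pow La Lb (proj1 gea) (proj1 geb) (proj1 gP).
Qed.

Lemma lorentz_space_tensor a b : lorentz_space w p a -> lorentz_space w p b ->
  lorentz_space w p (tensor a b).
Proof. by move=> La Lb; exact: le_lt_trans (lorentz_pow_tensor_le La Lb) (ltry _). Qed.

Lemma lorentz_norm_tensor_le a b : lorentz_space w p a -> lorentz_space w p b ->
  lorentz_norm w p (tensor a b) <= C `^ p^-1 * lorentz_norm w p a * lorentz_norm w p b.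
Proof.
move=> La Lb; have Lab := lorentz_space_tensor La Lb.
have fine_ge0 c : 0 <= fine (lorentz_pow w p c) by apply: fine_ge0; exact: lorentz_pow_ge0.
have := lorentz_pow_tensor_le La Lb; rewrite -lorentz_pow_fineK // lee_fin mulrA => tab.
rewrite /lorentz_norm -!powRM ?mulr_ge0 //.
by apply: (ler_powR_ge0 _ _ tab); rewrite ?invr_ge0.
Qed.

Lemma lorentz_space_delta0 : lorentz_space w p delta0.
Proof.
have g_id : greedy (fun k => cabs (@delta0 R k)) id.
  by apply: greedy_id => n; rewrite !cabs_delta0; case: n.
apply: le_lt_trans (lorentz_pow_le_greedy g_id) _; apply: le_lt_trans (ltry (w 1%N)).
apply: lorentz_series_le => -[|N]; rewrite lee_fin ?big_ord0 //.
rewrite big_ord_recl big1 => [|n _]; last by rewrite cabs_delta0 powR0 ?mulr0 // gt_eqF.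
by rewrite cabs_delta0 powR1 mulr1 addr0.
Qed.

Lemma stable_lorentz_space : stable (lorentz_space w p).
Proof.
apply/seteqP; split => [a|a La J [_ _ _ _ J_rearr] J_tensor].
  apply; first exact: calkin_lorentz_space.
  by move=> _ [c Lc [d Ld <-]]; exact: lorentz_space_tensor.
(* [a] and [a (x) delta0] have the same non-increasing rearrangement *)
have a_null := lorentz_space_null La.
have [ea [gea tE]] := tensor_delta0_greedy a_null.
have ctE k : cabs (tensor a delta0 k) = cabs (a (ea k)).
  by rewrite tE cabs_real ger0_norm ?cabs_ge0.
have g_id : greedy (fun k => cabs (tensor a delta0 k)) id.
  by apply: greedy_id => k; rewrite !ctE; exact: greedy_antitone gea (leqnSn k).
apply: (J_rearr (tensor a delta0) _ _ a_null) => [|n].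
  apply: J_tensor; exists a; first exact: La.
  by exists delta0; first exact: lorentz_space_delta0.
by rewrite /rearr (dec_rearr_greedy gea) (dec_rearr_greedy g_id) ctE.
Qed.

End LorentzSpace.

Theorem theorem2p10 (R : realType) (w : nat -> R) (C : R) :
  weight_seq w -> 0 < C ->
  (forall m n : nat, (1 <= m)%N -> (1 <= n)%N -> w (m * n)%N <= C * w m * w n) ->
  forall p : R, 1 <= p ->
    (forall a b : nat -> R[i],
       lorentz_space w p a -> lorentz_space w p b ->
       lorentz_space w p (tensor a b) /\
       lorentz_norm w p (tensor a b)
         <= C `^ p^-1 * lorentz_norm w p a * lorentz_norm w p b)
    /\ calkin (lorentz_space w p) /\ stable (lorentz_space w p).
Proof.
move=> [_ w_pos w_dec _ w_sum_infty] C_gt0 w_submul p p_ge1.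
have w_ge0 n : 0 <= w n.+1 by exact/ltW/w_pos.
have w_antitone n : w n.+2 <= w n.+1 by exact: w_dec.
have p_gt0 : 0 < p by exact: lt_le_trans ltr01 p_ge1.
split; [move=> a b La Lb; split | split].
- exact: (lorentz_space_tensor w_ge0 w_antitone p_gt0 w_sum_infty (ltW C_gt0) w_submul La Lb).
- exact: (lorentz_norm_tensor_le w_ge0 w_antitone p_gt0 w_sum_infty (ltW C_gt0) w_submul La Lb).
- exact: (calkin_lorentz_space w_ge0 w_antitone p_gt0 w_sum_infty).
- exact: (stable_lorentz_space w_ge0 w_antitone p_gt0 w_sum_infty (ltW C_gt0) w_submul).
Qed.
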